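(* Let $J\subseteq I$ and let $A$ be a $J$-antichain in $R^+$. Then $A$ is an abelian $J$-antichain if and only if both of the following hold: (1) for all $\alpha,\beta\in A$ with $\alpha\ne\beta$ there exists $i\in I$ with $d_i(\alpha)+d_i(\beta)>d_i(\theta)$; (2) for every $\alpha\in A$ there exists $i\in I$ with $2d_i(\alpha)>d_i(\theta)$.
   Context: $\mathfrak g$ is a complex simple Lie algebra of rank $n$ with root system $R$, $I=\{1,\dots,n\}$, simple roots $\{\alpha_i\}_{i\in I}$, $Q^+$ their $\mathbb Z_{\ge0}$-span, $R^+=R\cap Q^+$, $\theta$ the highest root. For $\eta$ in the root lattice write $\eta=\sum_i d_i(\eta)\alpha_i$. Partial order: $\lambda\le\mu$ iff $\mu-\lambda\in Q^+$. For $J\subseteq I$, $R^+(J)=\{\alpha\in R^+: d_i(\alpha)=0\ \forall i\notin J\}$. A $J$-antichain is a subset $A\subseteq R^+$ with $A\cap R^+(J)=\emptyset$, distinct elements pairwise incomparable, and $\alpha-\alpha_j\notin R$ for all $\alpha\in A$, $j\in J$. $\Phi(A)=\{\alpha\in R^+:\alpha\ge\beta\text{ for some }\beta\in A\}$. A $J$-antichain $A$ is abelian if for all $\beta_1,\beta_2\in\Phi(A)$ (not necessarily distinct) $\beta_1+\beta_2\notin R$. *)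

From HB Require Import structures.
From mathcomp Require Import all_boot all_order all_algebra.
Set Implicit Arguments. Unset Strict Implicit. Unset Printing Implicit Defensive.
Import Order.TTheory GRing.Theory Num.Theory.
Local Open Scope ring_scope.

(* A (finite, reduced, irreducible, crystallographic) root system with a
   chosen base {alpha_1,...,alpha_n}, written in coordinates w.r.t. that base:
   a vector x : 'rV[F]_n stands for  sum_i x_i alpha_i,  so d_i(x) = x 0 i,
   the simple root alpha_i is the unit row vector 'e_i = delta_mx 0 i, and the
   W-invariant inner product is given by the Gram matrix B of the simple roots. *)

Definition dcoord (F : realFieldType) (n : nat) (x : 'rV[F]_n) (i : 'I_n) : F :=
  x 0 i.

Definition sroot (F : realFieldType) (n : nat) (i : 'I_n) : 'rV[F]_n :=
  delta_mx 0 i.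

Definition bform (F : realFieldType) (n : nat) (B : 'M[F]_n) (x y : 'rV[F]_n) : F :=
  (x *m B *m y^T) 0 0.

Definition is_intF (F : realFieldType) (x : F) : Prop := exists z : int, x = z%:~R.

Definition cartan_int (F : realFieldType) (n : nat) (B : 'M[F]_n) (a b : 'rV[F]_n) : F :=
  2 * bform B b a / bform B a a.

Definition reflect_root (F : realFieldType) (n : nat) (B : 'M[F]_n) (a b : 'rV[F]_n)
  : 'rV[F]_n := b - cartan_int B a b *: a.

Definition simple_root_system (F : realFieldType) (n : nat) (B : 'M[F]_n)
  (R : seq 'rV[F]_n) : Prop :=
  [/\ (0 < n)%N /\ B^T = B /\ (forall x : 'rV[F]_n, x != 0 -> 0 < bform B x x),
      (0 : 'rV[F]_n) \notin R /\
      (forall a b, a \in R -> b \in R -> reflect_root B a b \in R) /\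
      (forall a b, a \in R -> b \in R -> is_intF (cartan_int B a b)),
      (forall a (c : F), a \in R -> c *: a \in R -> c = 1 \/ c = -1),
      (* the simple roots form a base *)
      (forall i, sroot F i \in R) /\
      (forall a, a \in R -> (forall i, is_intF (dcoord a i)) /\
          ((forall i, 0 <= dcoord a i) \/ (forall i, dcoord a i <= 0))) &
      (* irreducible: no decomposition into two nonempty orthogonal parts *)
      (forall P : 'rV[F]_n -> Prop,
          (exists2 a, a \in R & P a) -> (exists2 a, a \in R & ~ P a) ->
          exists a b, [/\ a \in R, b \in R, P a, ~ P b & bform B a b != 0])].

Definition qle (F : realFieldType) (n : nat) (x y : 'rV[F]_n) : Prop :=
  forall i, exists k : nat, dcoord y i - dcoord x i = k%:R.

Definition pos_root (F : realFieldType) (n : nat) (R : seq 'rV[F]_n) (a : 'rV[F]_n) : Prop :=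
  a \in R /\ forall i, 0 <= dcoord a i.

Definition highest_root (F : realFieldType) (n : nat) (R : seq 'rV[F]_n) (t : 'rV[F]_n) : Prop :=
  t \in R /\ forall a, a \in R -> qle a t.

Definition in_posJ (F : realFieldType) (n : nat) (R : seq 'rV[F]_n) (J : {set 'I_n})
  (a : 'rV[F]_n) : Prop :=
  pos_root R a /\ forall i, i \notin J -> dcoord a i = 0.

Definition J_antichain (F : realFieldType) (n : nat) (R : seq 'rV[F]_n) (J : {set 'I_n})
  (A : seq 'rV[F]_n) : Prop :=
  [/\ (forall a, a \in A -> pos_root R a),
      (forall a, a \in A -> ~ in_posJ R J a),
      (forall a b, a \in A -> b \in A -> a != b -> ~ qle a b) &
      (forall a j, a \in A -> j \in J -> a - sroot F j \notin R)].

Definition upper_closure (F : realFieldType) (n : nat) (R : seq 'rV[F]_n)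
  (A : seq 'rV[F]_n) (a : 'rV[F]_n) : Prop :=
  pos_root R a /\ exists2 b, b \in A & qle b a.

Definition abelian_J_antichain (F : realFieldType) (n : nat) (R : seq 'rV[F]_n)
  (J : {set 'I_n}) (A : seq 'rV[F]_n) : Prop :=
  J_antichain R J A /\
  forall b1 b2, upper_closure R A b1 -> upper_closure R A b2 -> b1 + b2 \notin R.

From HB Require Import structures.
From mathcomp Require Import all_boot all_order all_algebra.
Import Order.TTheory GRing.Theory Num.Theory.
Local Open Scope ring_scope.
Set Implicit Arguments. Unset Strict Implicit.

(* Proof of Proposition 1.6.  Conditions (1) and (2) together say that no two
   (possibly equal) elements a, b of A satisfy  a + b <= theta  coordinatewise.
   (<-) If b1 >= a and b2 >= b lie in Phi(A) and b1 + b2 were a root, then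
        a + b <= b1 + b2 <= theta, because theta is the highest root.
   (->) Conversely, if positive roots a, b satisfy a + b <= theta, we raise
        them by simple roots until their sum is a root.  Put d = theta - a - b.
        If a + b is not a root and no a + alpha_i or b + alpha_i with i in the
        support of d is a root, then all pairings (a,b), (a,d), (b,d) are >= 0
        (two non-opposite roots with negative pairing add up to a root), and
        2 (theta,c) >= (theta,theta) whenever (theta,c) > 0; together these
        force (d,d) <= 0, i.e. a + b = theta, a root.  Induction on the height
        of d finishes the raising. *)

Section BilinearForm.
Variables (F : realFieldType) (n : nat) (B : 'M[F]_n).

Lemma bformDl x y z : bform B (x + y) z = bform B x z + bform B y z.
Proof. by rewrite /bform !mulmxDl mxE. Qed.

Lemma bformDr x y z : bform B x (y + z) = bform B x y + bform B x z.
Proof. by rewrite /bform linearD /= mulmxDr mxE. Qed.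

Lemma bformZl c x z : bform B (c *: x) z = c * bform B x z.
Proof. by rewrite /bform -!scalemxAl mxE. Qed.

Lemma bformZr c x z : bform B x (c *: z) = c * bform B x z.
Proof. by rewrite /bform linearZ /= -scalemxAr mxE. Qed.

Lemma bformBl x y z : bform B (x - y) z = bform B x z - bform B y z.
Proof. by rewrite bformDl -scaleN1r bformZl mulN1r. Qed.

Lemma bformBr x y z : bform B x (y - z) = bform B x y - bform B x z.
Proof. by rewrite bformDr -scaleN1r bformZr mulN1r. Qed.

Lemma bform_sumr x (I : finType) (f : I -> 'rV[F]_n) :
  bform B x (\sum_i f i) = \sum_i bform B x (f i).
Proof.
apply: (big_morph (bform B x) (bformDr x)).
by rewrite /bform trmx0 mulmx0 mxE.
Qed.

Lemma bformC : B^T = B -> forall x y, bform B x y = bform B y x.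
Proof.
move=> symB x y; rewrite /bform -[in LHS](trmxK (x *m B *m y^T)) mxE.
by rewrite !trmx_mul trmxK symB mulmxA.
Qed.

End BilinearForm.

Lemma intF_le_Nn2 (F : realFieldType) (x : F) :
  is_intF x -> x < 0 -> x != -1 -> x <= -2.
Proof.
case=> z ->; rewrite ltrz0 -(intrN F 1) eqr_int -(intrN F 2) ler_int.
by case: z => [k|[|k]].
Qed.

Lemma intF_ge1 (F : realFieldType) (x : F) : is_intF x -> 0 < x -> 1 <= x.
Proof. by case=> z ->; rewrite ltr0z ler1z; case: z => [[|k]|k]. Qed.

Record crystallographic (F : realFieldType) (n : nat) (B : 'M[F]_n)
    (R : seq 'rV[F]_n) : Prop := Crystallographic {
  rs_sym : B^T = B;
  rs_pd : forall x : 'rV[F]_n, x != 0 -> 0 < bform B x x;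
  rs_nz : (0 : 'rV[F]_n) \notin R;
  rs_refl : forall a b, a \in R -> b \in R -> reflect_root B a b \in R;
  rs_int : forall a b, a \in R -> b \in R -> is_intF (cartan_int B a b);
  rs_reduced : forall a (c : F), a \in R -> c *: a \in R -> c = 1 \/ c = -1 }.

Lemma simple_crystallographic (F : realFieldType) (n : nat) (B : 'M[F]_n)
    (R : seq 'rV[F]_n) :
  simple_root_system B R -> crystallographic B R.
Proof. by case=> [[_ [? ?]] [? [? ?]] ? _ _]; constructor. Qed.

Section CrystallographicRootSystem.
Variables (F : realFieldType) (n : nat) (B : 'M[F]_n) (R : seq 'rV[F]_n).
Hypothesis hR : crystallographic B R.

Local Notation "( x , y )" := (bform B x y).

Lemma root_neq0 a : a \in R -> a != 0.
Proof. by move=> aR; apply: contraNneq (rs_nz hR) => <-. Qed.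

Lemma root_norm_gt0 a : a \in R -> 0 < (a, a).
Proof. by move=> /root_neq0 /(rs_pd hR). Qed.

(* Strict Cauchy-Schwarz: distinct, non-opposite roots are not proportional
   (R is reduced), so their Gram determinant is positive. *)
Lemma root_cauchy_schwarz a b : a \in R -> b \in R -> a != b -> a != - b ->
  (a, b) ^+ 2 < (a, a) * (b, b).
Proof.
move=> aR bR nab nanb; have bbp := root_norm_gt0 bR.
set c := (a, b) / (b, b).
have cbb : c * (b, b) = (a, b) by rewrite /c mulfVK // gt_eqF.
have [ea|nea] := eqVneq a (c *: b).
  have cbR : c *: b \in R by rewrite -ea.
  have [c1|c1] := rs_reduced hR bR cbR.
  - by move: nab; rewrite ea c1 scale1r eqxx.
  - by move: nanb; rewrite ea c1 scaleN1r eqxx.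
have : 0 < (a - c *: b, a - c *: b) * (b, b).
  by rewrite mulr_gt0 // (rs_pd hR) // subr_eq0.
rewrite bformBl !bformBr !bformZl !bformZr (bformC (rs_sym hR) b a) cbb.
by rewrite subrr subr0 mulrBl -mulrA (mulrC (a, b)) mulrA cbb subr_gt0 expr2.
Qed.

Lemma cartan_Nn1_sum_root a b : a \in R -> b \in R -> cartan_int B a b = -1 ->
  a + b \in R.
Proof.
move=> aR bR c1; have := rs_refl hR aR bR.
by rewrite /reflect_root c1 scaleN1r opprK addrC.
Qed.

(* Two non-opposite roots with negative pairing add up to a root: both
   Cartan integers are negative, and if neither were -1 their product would
   be >= 4, contradicting strict Cauchy-Schwarz. *)
Lemma neg_pairing_sum_root a b : a \in R -> b \in R -> (a, b) < 0 -> a != - b ->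
  a + b \in R.
Proof.
move=> aR bR hab nanb.
have nab : a != b.
  by apply: contraTneq hab => ->; rewrite -leNgt ltW // root_norm_gt0.
have aap := root_norm_gt0 aR; have bbp := root_norm_gt0 bR.
set p := cartan_int B a b; set q := cartan_int B b a.
have pa : p * (a, a) = 2 * (a, b).
  by rewrite /p /cartan_int (bformC (rs_sym hR) b a) mulfVK // gt_eqF.
have qb : q * (b, b) = 2 * (a, b) by rewrite /q /cartan_int mulfVK // gt_eqF.
have [p1|p1] := eqVneq p (-1); first exact: cartan_Nn1_sum_root.
have [q1|q1] := eqVneq q (-1); first by rewrite addrC cartan_Nn1_sum_root.
have pneg : p < 0 by rewrite -(pmulr_llt0 _ aap) pa pmulr_rlt0.
have qneg : q < 0 by rewrite -(pmulr_llt0 _ bbp) qb pmulr_rlt0.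
have p2 := intF_le_Nn2 (rs_int hR aR bR) pneg p1.
have q2 := intF_le_Nn2 (rs_int hR bR aR) qneg q1.
have pq4 : 4 <= p * q.
  rewrite -mulrNN (_ : 4 = 2 * 2); last by rewrite -natrM.
  by apply: ler_pM; rewrite // lerNr.
have := ler_pM2r (mulr_gt0 aap bbp) 4 (p * q).
rewrite pq4 mulrACA pa qb mulrACA -!expr2 (_ : 2 ^+ 2 = 4) ?ler_pM2l //.
  by rewrite leNgt root_cauchy_schwarz.
by rewrite expr2 -natrM.
Qed.

Lemma pos_pairing_norm_le x a : x \in R -> a \in R -> 0 < (x, a) ->
  (x, x) <= 2 * (x, a).
Proof.
move=> xR aR xa; have xxp := root_norm_gt0 xR.
have := intF_ge1 (rs_int hR xR aR).
rewrite /cartan_int (bformC (rs_sym hR) a) ler_pdivlMr // mul1r; apply.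
by rewrite divr_gt0 // mulr_gt0.
Qed.

Lemma root_decomposition_nonneg x a b d : x \in R -> a \in R -> b \in R ->
  x = a + b + d -> 0 <= (a, b) -> 0 <= (a, d) -> 0 <= (b, d) -> d = 0.
Proof.
move=> xR aR bR ex ab ad bd; have symF := bformC (rs_sym hR).
have xa : (x, a) = (a, a) + ((a, b) + (a, d)).
  by rewrite ex !bformDl (symF b) (symF d) addrA.
have xb : (x, b) = (b, b) + ((a, b) + (b, d)).
  by rewrite ex !bformDl (symF d) (addrC (a, b)) addrA.
have xa2 : (x, x) <= 2 * (x, a).
  apply: pos_pairing_norm_le => //; rewrite xa.
  by rewrite ltr_pwDl ?root_norm_gt0 ?addr_ge0.
have xb2 : (x, x) <= 2 * (x, b).
  apply: pos_pairing_norm_le => //; rewrite xb.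
  by rewrite ltr_pwDl ?root_norm_gt0 ?addr_ge0.
have xd : (x, d) <= 0.
  have -> : (x, d) = (x, x) - ((x, a) + (x, b)).
    by rewrite -bformDr -bformBr {3}ex addrC addKr.
  rewrite -(pmulr_rle0 _ (ltr0n F 2)) mulrBr mulrDr mulr_natl mulr2n.
  by rewrite subr_le0 lerD.
have dd : (d, d) <= 0.
  have -> : (d, d) = (x, d) - ((a, d) + (b, d)).
    by rewrite -bformDl -bformBl ex addrC addKr.
  by rewrite subr_le0 (le_trans xd) ?addr_ge0.
by apply/eqP; apply: contraT => /(rs_pd hR); rewrite ltNge dd.
Qed.

End CrystallographicRootSystem.

Section Coordinates.
Variables (F : realFieldType) (n : nat).
Implicit Types x y : 'rV[F]_n.

Definition height x : F := \sum_i dcoord x i.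

Lemma dcoordD x y i : dcoord (x + y) i = dcoord x i + dcoord y i.
Proof. by rewrite /dcoord mxE. Qed.

Lemma dcoordB x y i : dcoord (x - y) i = dcoord x i - dcoord y i.
Proof. by rewrite /dcoord !mxE. Qed.

Lemma dcoord_sroot (i j : 'I_n) : dcoord (sroot F i) j = (i == j)%:R.
Proof. by rewrite /dcoord /sroot mxE eqxx eq_sym. Qed.

Lemma qleE x y : qle x y <-> forall i, exists k : nat, dcoord (y - x) i = k%:R.
Proof.
by split=> h i; have [k hk] := h i; exists k; [rewrite dcoordB | rewrite -dcoordB].
Qed.

Lemma qle_refl x : qle x x.
Proof. by move=> i; exists 0%N; rewrite subrr. Qed.

Lemma qle_trans y x z : qle x y -> qle y z -> qle x z.
Proof.
move=> hxy hyz i; have [k hk] := hxy i; have [l hl] := hyz i.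
by exists (l + k)%N; rewrite natrD -hk -hl addrA subrK.
Qed.

Lemma qle_le x y i : qle x y -> dcoord x i <= dcoord y i.
Proof. by move=> /(_ i) [k hk]; rewrite -subr_ge0 hk ler0n. Qed.

Lemma le_int_qle x y : (forall i, is_intF (dcoord x i)) ->
  (forall i, is_intF (dcoord y i)) -> (forall i, dcoord x i <= dcoord y i) ->
  qle x y.
Proof.
move=> xZ yZ le_xy i; have [[z ez] [w ew]] := (xZ i, yZ i).
move: (le_xy i); rewrite -subr_ge0 ez ew -intrB ler0z.
by case: (w - z) => // k _; exists k.
Qed.

Lemma qle_add_sroot x i : qle x (x + sroot F i).
Proof.
by move=> j; exists (i == j)%N; rewrite dcoordD dcoord_sroot addrAC subrr add0r.
Qed.

Lemma qle_add_sroot_le x y i : qle x y -> dcoord (y - x) i != 0 ->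
  qle (x + sroot F i) y.
Proof.
move=> /qleE le_xy di; apply/qleE => j; have [k hk] := le_xy j.
rewrite opprD addrA dcoordB hk dcoord_sroot.
have [eij|nij] := eqVneq i j; last by exists k; rewrite subr0.
move: di; rewrite eij hk pnatr_eq0; case: k {hk} => // k _.
by exists k; rewrite mulrSr addrK.
Qed.

Lemma height_sub_sroot x i : height (x - sroot F i) = height x - 1.
Proof.
rewrite /height (eq_bigr _ (fun j _ => dcoordB x (sroot F i) j)) sumrB.
congr (_ - _); rewrite (bigD1 i) //= dcoord_sroot eqxx big1 ?addr0 // => j nji.
by rewrite dcoord_sroot eq_sym (negPf nji).
Qed.

Lemma qle_height_nat x y : qle x y -> exists m : nat, height (y - x) = m%:R.
Proof.
move=> /qleE le_xy; have [f hf] := fin_all_exists le_xy.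
by exists (\sum_i f i)%N; rewrite natr_sum; apply: eq_bigr => i _.
Qed.

Lemma dcoord_le_height x i : (forall j, 0 <= dcoord x j) -> dcoord x i <= height x.
Proof. by move=> x_ge0; rewrite /height (bigD1 i) //= lerDl sumr_ge0. Qed.

End Coordinates.

Section PositiveRoots.
Variables (F : realFieldType) (n : nat) (B : 'M[F]_n) (R : seq 'rV[F]_n).
Hypothesis hR : crystallographic B R.
Hypothesis sroot_in : forall i, sroot F i \in R.

Local Notation "( x , y )" := (bform B x y).

Lemma pos_root_neq_opp a b : pos_root R a -> pos_root R b -> a != - b.
Proof.
move=> [aR a_ge0] [bR b_ge0]; apply: contra_neq (root_neq0 hR aR) => eab.
apply/rowP => j; apply/le_anti; rewrite mxE a_ge0 andbT.
by rewrite eab mxE oppr_le0 b_ge0.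
Qed.

Lemma pos_root_add_sroot a i : pos_root R a -> a + sroot F i \in R ->
  pos_root R (a + sroot F i).
Proof. by move=> [_ a_ge0] aiR; split=> // j; rewrite dcoordD dcoord_sroot addr_ge0. Qed.

Lemma pos_pairing_of_nonroot_sum a b : pos_root R a -> pos_root R b ->
  a + b \notin R -> 0 <= (a, b).
Proof.
move=> pa pb; apply: contraNT; rewrite -ltNge => ab_lt0.
exact: neg_pairing_sum_root (proj1 pa) (proj1 pb) ab_lt0 (pos_root_neq_opp pa pb).
Qed.

Lemma pairing_nonneg_on_support c d : (forall i, 0 <= dcoord d i) ->
  (forall i, dcoord d i != 0 -> 0 <= (c, sroot F i)) -> 0 <= (c, d).
Proof.
move=> d_ge0 hc; rewrite [d]row_sum_delta bform_sumr; apply: sumr_ge0 => i _.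
rewrite bformZr -[d 0 i]/(dcoord d i).
have [d0|dn0] := eqVneq (dcoord d i) 0; first by rewrite d0 mul0r.
by rewrite mulr_ge0 ?d_ge0 ?hc.
Qed.

Lemma raise_step_exists theta a b : theta \in R -> pos_root R a -> pos_root R b ->
  qle (a + b) theta -> a + b \notin R ->
  exists i, dcoord (theta - (a + b)) i != 0 /\
            (a + sroot F i \in R \/ b + sroot F i \in R).
Proof.
move=> thR pa pb le_th nab; set d := theta - (a + b).
have d_ge0 i : 0 <= dcoord d i by have [k ->] := proj1 (qleE _ _) le_th i.
have [/existsP [i /andP [di /orP raise]]|/existsPn stuck] := boolP
  [exists i, (dcoord d i != 0) && ((a + sroot F i \in R) || (b + sroot F i \in R))].
  by exists i.
have unraisable c : pos_root R c ->
    (forall i, dcoord d i != 0 -> c + sroot F i \notin R) -> 0 <= (c, d).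
  move=> pc hc; apply: pairing_nonneg_on_support => // i /hc ciR.
  by apply: pos_pairing_of_nonroot_sum => //; split=> // j; rewrite dcoord_sroot ler0n.
have ad : 0 <= (a, d).
  by apply: unraisable => // i di; move: (stuck i); rewrite di negb_or => /andP [].
have bd : 0 <= (b, d).
  by apply: unraisable => // i di; move: (stuck i); rewrite di negb_or => /andP [].
have d0 : d = 0.
  apply: (root_decomposition_nonneg hR thR (proj1 pa) (proj1 pb) _ _ ad bd).
    by rewrite /d addrC subrK.
  exact: pos_pairing_of_nonroot_sum.
by move: nab; rewrite -[a + b]addr0 -d0 /d addrC subrK thR.
Qed.

Lemma raise_to_root_sum theta (m : nat) a b : theta \in R ->
  pos_root R a -> pos_root R b -> qle (a + b) theta ->
  height (theta - (a + b)) = m%:R ->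
  exists b1 b2, [/\ pos_root R b1, pos_root R b2, qle a b1, qle b b2 & b1 + b2 \in R].
Proof.
move=> thR; elim: m a b => [|m IH] a b pa pb le_th hm;
  (have [abR|nab] := boolP (a + b \in R);
     first by exists a, b; split=> //; apply: qle_refl);
  have [i [di raise]] := raise_step_exists thR pa pb le_th nab;
  have d_ge0 j : 0 <= dcoord (theta - (a + b)) j
    by have [k ->] := proj1 (qleE _ _) le_th j.
  by move: (dcoord_le_height i d_ge0); rewrite hm leNgt lt_def di d_ge0.
have le_raised := qle_add_sroot_le le_th di.
have hm_raised : height (theta - (a + b + sroot F i)) = m%:R.
  by rewrite opprD addrA height_sub_sroot hm mulrSr addrK.
case: raise => [aiR|biR].
- have le_ai : qle (a + sroot F i + b) theta by move: le_raised; rewrite addrAC.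
  have hm_ai : height (theta - (a + sroot F i + b)) = m%:R.
    by rewrite addrAC hm_raised.
  have [b1 [b2 [? ? le_b1 ? ?]]] := IH _ _ (pos_root_add_sroot pa aiR) pb le_ai hm_ai.
  by exists b1, b2; split=> //; apply: qle_trans le_b1; apply: qle_add_sroot.
- have le_bi : qle (a + (b + sroot F i)) theta by move: le_raised; rewrite addrA.
  have hm_bi : height (theta - (a + (b + sroot F i))) = m%:R.
    by rewrite addrA hm_raised.
  have [b1 [b2 [? ? ? le_b2 ?]]] := IH _ _ pa (pos_root_add_sroot pb biR) le_bi hm_bi.
  by exists b1, b2; split=> //; apply: qle_trans le_b2; apply: qle_add_sroot.
Qed.

End PositiveRoots.

Lemma exists_lt_of_not_le (F : realFieldType) (I : finType) (f g : I -> F) :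
  ~ (forall i, f i <= g i) -> exists i, g i < f i.
Proof.
move=> not_le; have [/existsP [i lt_i]|/existsPn le_all] := boolP [exists i, g i < f i].
  by exists i.
by case: not_le => i; rewrite leNgt le_all.
Qed.

Lemma is_intFD (F : realFieldType) (x y : F) :
  is_intF x -> is_intF y -> is_intF (x + y).
Proof. by case=> z -> [w ->]; exists (z + w); rewrite intrD. Qed.

Section Antichains.
Variables (F : realFieldType) (n : nat) (B : 'M[F]_n) (R : seq 'rV[F]_n).
Variables (theta : 'rV[F]_n) (J : {set 'I_n}) (A : seq 'rV[F]_n).

(* (->): in an abelian J-antichain no two elements a, b (possibly equal)
   satisfy a + b <= theta: otherwise raising them inside Phi(A) produces two
   elements of Phi(A) whose sum is a root. *)
Lemma abelian_no_sum_below_theta a b : simple_root_system B R -> theta \in R ->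
  abelian_J_antichain R J A -> a \in A -> b \in A ->
  ~ (forall i, dcoord a i + dcoord b i <= dcoord theta i).
Proof.
move=> hR thR [[A_pos _ _ _] abelian] aA bA le_ab.
have [_ _ _ [sroot_in coords] _] := hR.
have [pa pb] := (A_pos a aA, A_pos b bA).
have int_coord c i : c \in R -> is_intF (dcoord c i) by move/coords => [].
have le_th : qle (a + b) theta.
  apply: le_int_qle => [i | i | i]; last by rewrite dcoordD.
    by rewrite dcoordD; apply: is_intFD; apply: int_coord; [exact: pa.1 | exact: pb.1].
  exact: int_coord.
have [m hm] := qle_height_nat le_th.
have [b1 [b2 [p1 p2 le_b1 le_b2 b12R]]] :=
  raise_to_root_sum (simple_crystallographic hR) sroot_in thR pa pb le_th hm.
have := abelian b1 b2 (conj p1 (ex_intro2 _ _ a aA le_b1))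
                      (conj p2 (ex_intro2 _ _ b bA le_b2)).
by rewrite b12R.
Qed.

Lemma closure_root_sum_below_theta b1 b2 : highest_root R theta ->
  upper_closure R A b1 -> upper_closure R A b2 -> b1 + b2 \in R ->
  exists a b, [/\ a \in A, b \in A &
                  forall i, dcoord a i + dcoord b i <= dcoord theta i].
Proof.
move=> [_ th_max] [_ [a aA le_a]] [_ [b bA le_b]] b12R.
exists a, b; split=> // i; apply: le_trans (qle_le i (th_max _ b12R)).
by rewrite dcoordD lerD ?qle_le.
Qed.

End Antichains.

Unset Implicit Arguments. Set Strict Implicit.

Theorem proposition1p6 (F : realFieldType) (n : nat) (B : 'M[F]_n)
  (R : seq 'rV[F]_n) (theta : 'rV[F]_n) (J : {set 'I_n}) (A : seq 'rV[F]_n) :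
  simple_root_system B R ->
  highest_root R theta ->
  J_antichain R J A ->
  (abelian_J_antichain R J A <->
   (forall a b, a \in A -> b \in A -> a != b ->
      exists i, dcoord theta i < dcoord a i + dcoord b i) /\
   (forall a, a \in A -> exists i, dcoord theta i < 2 * dcoord a i)).
Proof.
move=> hR th_highest hA; have thR := th_highest.1.
have twice x : 2 * x = x + x :> F by rewrite mulr_natl mulr2n.
split=> [abelian | [sum_gt twice_gt]].
  split=> [a b aA bA _ | a aA]; apply: exists_lt_of_not_le.
    exact: abelian_no_sum_below_theta hR thR abelian aA bA.
  move=> le_twice; apply: (abelian_no_sum_below_theta hR thR abelian aA aA) => i.
  by rewrite -twice le_twice.
split=> // b1 b2 u1 u2; apply/negP => b12R.
have [a [b [aA bA le_ab]]] := closure_root_sum_below_theta th_highest u1 u2 b12R.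
have [eab|nab] := eqVneq a b.
  by subst b; have [i] := twice_gt a aA; rewrite twice ltNge le_ab.
by have [i] := sum_gt a b aA bA nab; rewrite ltNge le_ab.
Qed.
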